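(* Let $K$ be a non-empty compact Hausdorff space, and let $P\colon C(K)\to C(K)$ be a positive linear projection (i.e. $P^2=P$ and $Pf\ge 0$ whenever $f\ge 0$) with $P\mathbb{1}_K=\mathbb{1}_K$. Suppose there exists $\alpha\ge 0$ such that: (i) $\alpha\,\mathrm{id}_{C(K)}\le P$ (i.e. $Pf-\alpha f\ge 0$ for all $f\in C(K)_+$), and (ii) whenever $f\in C(K)$ satisfies $0\le M_f\le P$, then $\|f\|_\infty\le\alpha$. Then either $\alpha=0$ or $\alpha=1/n$ for some $n\in\mathbb{N}$.
   Context: $C(K)$ is the Banach lattice of real-valued continuous functions on $K$ with the pointwise order and sup norm; $\mathbb{1}_K$ is the constant function $1$. For $f\in C(K)$, $M_f\colon C(K)\to C(K)$ is the multiplication operator $M_f(g)=fg$. For operators $S,T$ on $C(K)$, $S\le T$ means $T-S$ is a positive operator. *)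

From HB Require Import structures.
From mathcomp Require Import all_boot all_order all_algebra.
From mathcomp Require Import all_classical all_reals all_analysis.
Import numFieldNormedType.Exports.
Set Implicit Arguments. Unset Strict Implicit. Unset Printing Implicit Defensive.
Import Order.TTheory GRing.Theory Num.Theory.
Local Open Scope ring_scope.
Local Open Scope classical_set_scope.

(* C(K) is modelled as the functions K -> R that are continuous;
   an operator on C(K) is a map (K -> R) -> (K -> R) whose behaviour is only
   constrained on continuous inputs. *)

Section Defs.
Variables (R : realType) (K : topologicalType).

Definition CK_op_maps (T : (K -> R) -> (K -> R)) : Prop :=
  forall f : K -> R, continuous f -> continuous (T f).

Definition CK_linear (T : (K -> R) -> (K -> R)) : Prop :=
  forall (a : R) (f g : K -> R), continuous f -> continuous g ->
    T (fun x => a * f x + g x) = (fun x => a * T f x + T g x).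

Definition CK_positive (T : (K -> R) -> (K -> R)) : Prop :=
  forall f : K -> R, continuous f -> (forall x, 0 <= f x) -> forall x, 0 <= T f x.

Definition CK_op_le (S T : (K -> R) -> (K -> R)) : Prop :=
  CK_positive (fun f x => T f x - S f x).

Definition mult_op (f : K -> R) : (K -> R) -> (K -> R) :=
  fun g x => f x * g x.

Definition scal_id (a : R) : (K -> R) -> (K -> R) := fun g x => a * g x.

Definition zero_op : (K -> R) -> (K -> R) := fun _ _ => 0.

Definition supnorm (f : K -> R) : R := sup (range (fun x => `|f x|)).

End Defs.

From HB Require Import structures.
From mathcomp Require Import all_boot all_order all_algebra.
From mathcomp Require Import all_classical all_reals all_analysis.
From mathcomp Require Import ring lra.
Import numFieldNormedType.Exports.
Import Order.TTheory GRing.Theory Num.Theory.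
Local Open Scope ring_scope.
Local Open Scope classical_set_scope.

(* Condition (i) forces the range of P to be closed under squaring, so the
   functionals f |-> P f x split K into "fibers" (points that the range of P
   does not separate), and by compactness P f x only depends on f on the fiber
   of x.  Evaluating P at x on disjoint bumps around the points of a fiber
   gives values >= alpha summing to at most 1, so fibers have at most
   1/alpha points.  On a fiber {z_1, ..., z_M} of maximal size the values
   P G_i x sum to exactly 1, and testing (ii) on a multiplier built from the
   P G_j shows that each of them is <= alpha; hence alpha = 1/M. *)

Section ContinuousFunctions.
Context {R : realType} {K : topologicalType}.
Implicit Types (f g : K -> R).

Lemma continuous_addr {f g} :
  continuous f -> continuous g -> continuous (fun x => f x + g x).
Proof. by move=> fc gc x; apply: cvgD; [exact: fc | exact: gc]. Qed.

Lemma continuous_subr {f g} :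
  continuous f -> continuous g -> continuous (fun x => f x - g x).
Proof. by move=> fc gc x; apply: cvgB; [exact: fc | exact: gc]. Qed.

Lemma continuous_mulr {f g} :
  continuous f -> continuous g -> continuous (fun x => f x * g x).
Proof. by move=> fc gc x; apply: cvgM; [exact: fc | exact: gc]. Qed.

Lemma continuous_sqr {f} : continuous f -> continuous (fun x => f x ^+ 2).
Proof. by move=> fc; under eq_fun do rewrite expr2; exact: continuous_mulr. Qed.

Lemma continuous_minr {f g} :
  continuous f -> continuous g -> continuous (fun x => Num.min (f x) (g x)).
Proof. by move=> fc gc x; exact: (@continuous_min R K f g x (fc x) (gc x)). Qed.

Lemma continuous_maxr {f g} :
  continuous f -> continuous g -> continuous (fun x => Num.max (f x) (g x)).
Proof. by move=> fc gc x; exact: (@continuous_max R K f g x (fc x) (gc x)). Qed.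

Lemma continuous_sumr (I : Type) (s : seq I) (Q : pred I) (F : I -> K -> R) :
  (forall i, continuous (F i)) -> continuous (fun x => \sum_(i <- s | Q i) F i x).
Proof.
move=> Fc; elim: s => [|i s IHs].
  by under eq_fun do rewrite big_nil; exact: cst_continuous.
by under eq_fun do rewrite big_cons; case: (Q i) => //; exact: continuous_addr.
Qed.

Lemma continuous_prodr (I : Type) (s : seq I) (Q : pred I) (F : I -> K -> R) :
  (forall i, continuous (F i)) -> continuous (fun x => \prod_(i <- s | Q i) F i x).
Proof.
move=> Fc; elim: s => [|i s IHs].
  by under eq_fun do rewrite big_nil; exact: cst_continuous.
by under eq_fun do rewrite big_cons; case: (Q i) => //; exact: continuous_mulr.
Qed.

Lemma ler_supnorm {f} {b : R} z : (forall y, `|f y| <= b) -> `|f z| <= supnorm f.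
Proof.
move=> fb; apply: sup_upper_bound; last by exists z.
by split; [exists `|f z|, z | exists b => _ [y _ <-]].
Qed.

(* The sets [e + h <= g], h in D, form a filter base of closed sets; a cluster
   point y would satisfy e + h y <= g y for every h in D, against the last
   hypothesis. *)
Lemma compact_dominate (D : set (K -> R)) g (e : R) :
  compact [set: K] -> continuous g ->
  D (fun=> 0) -> (forall h1 h2, D h1 -> D h2 -> D (fun y => h1 y + h2 y)) ->
  (forall h, D h -> continuous h /\ forall y, 0 <= h y) ->
  (forall y, e <= g y -> exists2 h, D h & g y < e + h y) ->
  exists2 h, D h & forall y, g y <= e + h y.
Proof.
move=> Kc gc D0 DD Dreg gD.
pose B h := [set y | e + h y <= g y].
have [[h Dh Bh0]|nB] := pselect (exists2 h, D h & B h = set0).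
  exists h => // y; rewrite leNgt; apply/negP => /ltW hy.
  by have : B h y by []; rewrite Bh0.
have B_proper : ProperFilter (filter_from D B).
  apply: filter_from_proper; last first.
    by move=> h Dh; apply/set0P/eqP => Bh0; apply: nB; exists h.
  apply: filter_from_filter; first by exists (fun=> 0).
  move=> h1 h2 D1 D2; exists (fun y => h1 y + h2 y); first exact: DD.
  have [_ h1_ge0] := Dreg _ D1; have [_ h2_ge0] := Dreg _ D2.
  move=> y; rewrite /B /= => hy.
  by split; [have := h2_ge0 y | have := h1_ge0 y]; lra.
have [y [_ y_cluster]] := Kc _ B_proper filterT.
rewrite clusterE in y_cluster.
have By h : D h -> B h y.
  move=> Dh; have [hc _] := Dreg _ Dh.
  have Bh_closed : closed (B h).
    have -> : B h = (fun z => g z - h z - e) @^-1` [set r : R | 0 <= r].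
      by apply/funext => z; apply/propext; rewrite /B /=; split; lra.
    apply: preimage_closed; last exact: closed_ge.
    move=> z _; apply: continuous_subr; last exact: cst_continuous.
    exact: continuous_subr.
  by move/closure_id: Bh_closed => ->; apply: y_cluster; exact: in_filter_from.
have e_le_gy : e <= g y by have := By _ D0; rewrite /B /= addr0.
have [h Dh hy] := gD y e_le_gy.
by have := By h Dh; rewrite /B /=; lra.
Qed.

End ContinuousFunctions.

Lemma ler_sum_term (R : numDomainType) (I : eqType) (r : seq I) (Q : pred I)
    (F : I -> R) j :
  (forall i, 0 <= F i) -> j \in r -> Q j -> F j <= \sum_(i <- r | Q i) F i.
Proof.
move=> F0; elim: r => // a r IHr; rewrite inE big_cons => /orP [/eqP <-| jr] Qj.
  by rewrite Qj lerDl sumr_ge0.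
case: (Q a); last exact: IHr.
by rewrite addrC ler_wpDr // IHr.
Qed.

Record bump_family {R : realType} {K : topologicalType} (s : seq K)
    (G : K -> K -> R) : Prop := BumpFamily {
  bump_continuous : forall z, continuous (G z);
  bump_ge0 : forall z y, 0 <= G z y;
  bump_le1 : forall z y, G z y <= 1;
  bump_peak : forall z, z \in s -> G z z = 1;
  bump_disjoint : forall z z' y, z \in s -> z' \in s -> z != z' ->
    G z y = 0 \/ G z' y = 0 }.
Arguments bump_continuous {R K s G}.
Arguments bump_ge0 {R K s G}.
Arguments bump_le1 {R K s G}.
Arguments bump_peak {R K s G} _ {z}.
Arguments bump_disjoint {R K s G} _ {z z'} y.

Section Bumps.
Context {R : realType} {K : topologicalType}.
Hypotheses (K_hausdorff : hausdorff_space K) (K_compact : compact [set: K]).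

Lemma urysohn_points (z q : K) : z != q -> exists f : K -> R,
  [/\ continuous f, forall y, 0 <= f y <= 1, f q = 0 & f z = 1].
Proof.
move=> zq.
have points_closed := accessible_closed_set1 (hausdorff_accessible K_hausdorff).
have qz_disj : [set q] `&` [set z] = set0.
  by apply/seteqP; split => y //= [-> yz]; move: zq; rewrite yz eqxx.
have := (@normal_separatorP R K).1 (compact_normal K_hausdorff K_compact) _ _
  (points_closed q) (points_closed z) qz_disj.
move/(@uniform_separatorP _ R) => [f [fc f01 f0 f1]].
exists f; split => //.
- by move=> y; have := f01 (f y) (imageT f y); rewrite /= in_itv.
- by apply: f0; exists q.
- by apply: f1; exists z.
Qed.

Lemma exists_peaks (s : seq K) : exists h : K -> K -> R,
  [/\ forall z, continuous (h z), forall z y, 0 <= h z y <= 1,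
      forall z, h z z = 1 & forall z q, z \in s -> q != z -> h q z = 0].
Proof.
have : forall p : K * K, exists f : K -> R, [/\ continuous f,
    forall y, 0 <= f y <= 1 & p.1 != p.2 -> f p.2 = 0 /\ f p.1 = 1].
  move=> [z q] /=; have [_|zq] := eqVneq z q.
    by exists (fun=> 1); split => //; [exact: cst_continuous | rewrite ler01 lexx].
  by have [f [fc f01 fq fz]] := urysohn_points _ _ zq; exists f.
move=> /choice [U U_sep].
exists (fun z y => \prod_(q <- s | q != z) U (z, q) y); split.
- by move=> z; apply: continuous_prodr => q; case: (U_sep (z, q)).
- move=> z y; apply/andP; split.
    by apply: prodr_ge0 => q _; case: (U_sep (z, q)) => _ /(_ y) /andP[].
  by apply: prodr_ile1 => q _; case: (U_sep (z, q)) => _ /(_ y).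
- move=> z; apply: big1_seq => q /andP [qz _].
  by case: (U_sep (z, q)) => _ _ /(_ _) [|_ //]; rewrite /= eq_sym.
- move=> z q zs qz; apply/eqP; rewrite prodf_seq_eq0; apply/hasP; exists z => //.
  by rewrite eq_sym qz; case: (U_sep (q, z)) => _ _ /(_ qz) [/= -> _].
Qed.

(* Sharpening G z := max(0, h z - sum of the other peaks) makes the supports
   disjoint: G z y > 0 and G z' y > 0 would give h z y > h z' y > h z y. *)
Lemma exists_bump_family (s : seq K) : exists G : K -> K -> R, bump_family s G.
Proof.
have [h [hc h01 h_peak h_off]] := exists_peaks s.
have h0 z y : 0 <= h z y by have /andP[] := h01 z y.
pose rest z y := \sum_(q <- s | q != z) h q y.
have rest0 z y : 0 <= rest z y by apply: sumr_ge0.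
exists (fun z y => Num.max 0 (h z y - rest z y)); split.
- move=> z; apply: continuous_maxr; first exact: cst_continuous.
  by apply: continuous_subr => //; exact: continuous_sumr.
- by move=> z y; rewrite le_max lexx.
- move=> z y; rewrite ge_max ler01 /=; have /andP[_ h1] := h01 z y.
  by have := rest0 z y; lra.
- move=> z zs; rewrite /rest big1_seq ?h_peak ?subr0; first exact/max_idPr/ler01.
  by move=> q /andP [qz _]; exact: h_off.
- move=> z z' y zs z's zz' /=.
  have le_rest_z : h z' y <= rest z y.
    by apply: (@ler_sum_term _ _ s (fun q => q != z) (h^~ y)); rewrite // eq_sym.
  have le_rest_z' : h z y <= rest z' y.
    exact: (@ler_sum_term _ _ s (fun q => q != z') (h^~ y)).
  have [le0|gt0] := leP (h z y - rest z y) 0; first by left.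
  by right; apply/max_idPl; have := rest0 z y; lra.
Qed.

End Bumps.

Section BumpSums.
Context {R : realType} {K : topologicalType}.
Variables (s : seq K) (G : K -> K -> R).
Hypotheses (s_uniq : uniq s) (G_bump : bump_family s G).

Lemma bump_sum_le1 y : \sum_(z <- s) G z y <= 1.
Proof.
have [[z0 z0s Gz0]|G0] := pselect (exists2 z, z \in s & G z y != 0).
  rewrite (bigD1_seq z0) //= big1_seq ?addr0 => [|z /andP [zz0 zs]].
    exact: (bump_le1 G_bump z0 y).
  have [//|] := bump_disjoint G_bump y zs z0s zz0.
  by move/eqP: Gz0.
rewrite big1_seq ?ler01 // => z /andP [_ zs].
by apply: contrapT => Gz; apply: G0; exists z => //; exact/eqP.
Qed.

Lemma bump_sum_at q : q \in s -> \sum_(z <- s) G z q = 1.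
Proof.
move=> qs; rewrite (bigD1_seq q) //= (bump_peak G_bump qs) big1_seq ?addr0 //.
move=> z /andP [zq zs]; have [//|] := bump_disjoint G_bump q zs qs zq.
by rewrite (bump_peak G_bump qs) => /eqP; rewrite oner_eq0.
Qed.

End BumpSums.

Section PositiveOperator.
Variables (R : realType) (K : topologicalType) (P : (K -> R) -> (K -> R)).
Hypotheses (P_maps : CK_op_maps P) (P_linear : CK_linear P)
  (P_pos : CK_positive P) (P1 : P (fun=> 1) = (fun=> 1)).
Implicit Types (f g h k u : K -> R) (a b c : R) (x y z : K).

Lemma op0 : P (fun=> 0) = (fun=> 0).
Proof.
have c0 : continuous (fun _ : K => 0 : R) := @cst_continuous _ _ 0.
have := P_linear 1 _ _ c0 c0.
have -> : (fun _ : K => 1 * 0 + 0 : R) = (fun=> 0).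
  by apply/funext => x; rewrite mulr0 addr0.
move=> P0E; apply/funext => x; have := congr1 (fun h => h x) P0E.
by rewrite mul1r /=; lra.
Qed.

Lemma opD f g x : continuous f -> continuous g ->
  P (fun y => f y + g y) x = P f x + P g x.
Proof.
move=> fc gc; have := P_linear 1 _ _ fc gc.
under [in X in X -> _]eq_fun do rewrite mul1r.
by move=> ->; rewrite mul1r.
Qed.

Lemma opZ a f x : continuous f -> P (fun y => a * f y) x = a * P f x.
Proof.
move=> fc; have := P_linear a _ _ fc (@cst_continuous _ _ 0).
under [in X in X -> _]eq_fun do rewrite addr0.
by move=> ->; rewrite op0 addr0.
Qed.

Lemma opB f g x : continuous f -> continuous g ->
  P (fun y => f y - g y) x = P f x - P g x.
Proof.
move=> fc gc; have := P_linear (-1) _ _ gc fc.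
under [in X in X -> _]eq_fun do rewrite mulN1r addrC.
by move=> ->; rewrite mulN1r addrC.
Qed.

Lemma op_cst c x : P (fun=> c) x = c.
Proof.
have := opZ c (fun=> 1) x (@cst_continuous _ _ (1 : R)).
under [in X in X -> _]eq_fun do rewrite mulr1.
by move=> ->; rewrite P1 mulr1.
Qed.

Lemma op_sum (I : Type) (s : seq I) (F : I -> K -> R) x :
  (forall i, continuous (F i)) ->
  P (fun y => \sum_(i <- s) F i y) x = \sum_(i <- s) P (F i) x.
Proof.
move=> Fc; elim: s => [|i s IHs].
  by under eq_fun do rewrite big_nil; rewrite big_nil op_cst.
under eq_fun do rewrite big_cons.
by rewrite opD ?big_cons ?IHs //; exact: continuous_sumr.
Qed.

Lemma ler_op {f g} x : continuous f -> continuous g ->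
  (forall y, f y <= g y) -> P f x <= P g x.
Proof.
move=> fc gc fg; rewrite -subr_ge0 -opB //.
by apply: P_pos => [|y]; [exact: continuous_subr | rewrite subr_ge0].
Qed.

Lemma op_sqr_subc u c x : continuous u ->
  P (fun y => (u y - c) ^+ 2) x = P (fun y => u y ^+ 2) x - 2 * c * P u x + c ^+ 2.
Proof.
move=> uc.
have u2c := continuous_sqr uc.
have -> : (fun y => (u y - c) ^+ 2) =
    (fun y => - (2 * c) * u y + (u y ^+ 2 + c ^+ 2)).
  by apply/funext => y; rewrite sqrrB; ring.
rewrite (P_linear _ _ _ uc (continuous_addr u2c (@cst_continuous _ _ (c ^+ 2)))) /=.
by rewrite opD ?op_cst //; [ring | exact: cst_continuous].
Qed.

Definition fiber x z := forall k, continuous k -> P k z = P k x.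

Lemma fiber_refl x : fiber x x.
Proof. by []. Qed.

Definition fiber_seq x (s : seq K) := uniq s /\ forall z, z \in s -> fiber x z.

Definition null_at x h := [/\ continuous h, forall y, 0 <= h y & P h x = 0].

Section Projection.
Variable alpha : R.
Hypotheses (P_idem : forall f, continuous f -> P (P f) = P f)
  (alpha_gt0 : 0 < alpha) (alpha_le_P : CK_op_le (scal_id alpha) P).

Lemma scal_le_op {g} x : continuous g -> (forall y, 0 <= g y) ->
  alpha * g x <= P g x.
Proof. by move=> gc g0; have := alpha_le_P _ gc g0 x; rewrite subr_ge0. Qed.

Lemma scal_le_op_fiber {g x z} : fiber x z -> continuous g ->
  (forall y, 0 <= g y) -> alpha * g z <= P g x.
Proof. by move=> xz gc g0; rewrite -(xz g gc); exact: scal_le_op. Qed.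

Lemma sqr_le_op_sqr k x : continuous k -> P k x ^+ 2 <= P (fun y => P k y ^+ 2) x.
Proof.
move=> kc; have Pkc := P_maps _ kc.
have dev_c := continuous_sqr (continuous_subr Pkc (@cst_continuous _ _ (P k x))).
have := P_pos _ dev_c (fun y => sqr_ge0 _) x.
by rewrite op_sqr_subc // P_idem //; lra.
Qed.

(* This is where (i) enters: the defect v := P ((P k)^2) - (P k)^2 is
   nonnegative and P v = 0, so alpha * v <= P v forces v = 0. *)
Lemma op_range_sqr k : continuous k ->
  P (fun y => P k y ^+ 2) = (fun y => P k y ^+ 2).
Proof.
move=> kc; have Pkc := P_maps _ kc.
have Pk2c := continuous_sqr Pkc.
pose v y := P (fun z => P k z ^+ 2) y - P k y ^+ 2.
have vc : continuous v by apply: continuous_subr => //; exact: P_maps.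
have v0 y : 0 <= v y by rewrite subr_ge0; exact: sqr_le_op_sqr.
have Pv0 y : P v y = 0 by rewrite opB ?P_idem ?subrr //; exact: P_maps.
apply/funext => y; have := scal_le_op y vc v0.
rewrite Pv0 pmulr_rle0 // => vy0.
by move: vy0 (v0 y); rewrite /v; lra.
Qed.

Lemma op_sqr_dev_eq0 k x : continuous k ->
  P (fun y => (P k y - P k x) ^+ 2) x = 0.
Proof.
by move=> kc; rewrite op_sqr_subc ?op_range_sqr ?P_idem //; [ring | exact: P_maps].
Qed.

Lemma fiber_separation x y : ~ fiber x y ->
  forall b, exists2 h, null_at x h & b < h y.
Proof.
move=> nxy b.
have [k /not_implyP [kc kyx]] : exists k, ~ (continuous k -> P k y = P k x).
  by apply/existsNP.
pose d := (P k y - P k x) ^+ 2.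
have d0 : 0 < d.
  by rewrite lt_neqAle sqr_ge0 andbT eq_sym sqrf_eq0 subr_eq0; apply/eqP.
have dev_c :=
  continuous_sqr (continuous_subr (P_maps _ kc) (@cst_continuous _ _ (P k x))).
exists (fun z => (`|b| + 1) / d * (P k z - P k x) ^+ 2).
  split; first by apply: continuous_mulr => //; exact: cst_continuous.
    by move=> z; rewrite mulr_ge0 ?sqr_ge0 ?divr_ge0 ?ltW //; lra.
  by rewrite opZ // op_sqr_dev_eq0 // mulr0.
by rewrite -/d divfK ?gt_eqF //; have := ler_norm b; lra.
Qed.

Hypothesis K_compact : compact [set: K].

Lemma op_eq0_off_fiber x g : continuous g -> (forall y, 0 <= g y) ->
  (forall z, fiber x z -> g z = 0) -> P g x = 0.
Proof.
move=> gc g0 g_fiber; apply/eqP; rewrite eq_le P_pos // andbT.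
apply/ler_addgt0Pr => e e0; rewrite add0r.
have [h [hc _ Ph0] g_le] : exists2 h, null_at x h & forall y, g y <= e + h y.
  apply: compact_dominate => //.
  - by split; [exact: cst_continuous | by [] | rewrite op0].
  - move=> h1 h2 [h1c h1_ge0 Ph1] [h2c h2_ge0 Ph2]; split.
    + exact: continuous_addr.
    + by move=> y; rewrite addr_ge0.
    + by rewrite opD // Ph1 Ph2 addr0.
  - by move=> h [].
  move=> y e_le_gy; have nxy : ~ fiber x y by move=> /g_fiber gy0; lra.
  by have [h xh gy_lt] := fiber_separation _ _ nxy (g y); exists h => //; lra.
have := ler_op x gc (continuous_addr (@cst_continuous _ _ e) hc) g_le.
by rewrite opD ?op_cst ?Ph0 ?addr0 //; exact: cst_continuous.
Qed.

Lemma fiber_meets_support x g : continuous g -> (forall y, 0 <= g y) ->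
  P g x != 0 -> exists2 z, fiber x z & g z != 0.
Proof.
move=> gc g0 /eqP Pg0; apply: contrapT => g_off; apply: Pg0.
apply: op_eq0_off_fiber => // z xz; apply: contrapT => gz.
by apply: g_off; exists z => //; exact/eqP.
Qed.

(* With c := h y / g y, the function (c g - h)^+ vanishes on the fiber of y,
   so P annihilates it at y. *)
Lemma op_local_lower {g h y} : continuous g -> (forall z, 0 <= g z) ->
  0 < g y <= 1 -> (forall q, fiber y q -> q != y -> g q = 0) ->
  continuous h -> (forall z, 0 <= h z) -> h y * P g y <= P h y.
Proof.
move=> gc g0 /andP[gy_gt0 gy_le1] g_single hc h0.
pose c := h y / g y.
have cgc : continuous (fun z => c * g z).
  by apply: continuous_mulr => //; exact: cst_continuous.
pose r z := Num.max (c * g z - h z) 0.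
have rc : continuous r.
  by apply: continuous_maxr; [exact: continuous_subr | exact: cst_continuous].
have Pr0 : P r y = 0.
  apply: op_eq0_off_fiber => //; first by move=> z; rewrite le_max lexx orbT.
  move=> q yq; apply/max_idPr; have [->|qy] := eqVneq q y.
    by rewrite /c divfK ?subrr // gt_eqF.
  by rewrite g_single // mulr0 sub0r oppr_le0.
have : c * P g y - P h y <= 0.
  rewrite -opZ // -opB // -Pr0.
  by apply: (ler_op y (continuous_subr cgc hc) rc) => z; rewrite le_max lexx.
have hy_le_c : h y <= c by rewrite /c ler_pdivlMr //; have := h0 y; nra.
have := ler_wpM2r (P_pos _ gc g0 y) hy_le_c; lra.
Qed.

Hypothesis K_hausdorff : hausdorff_space K.

Lemma fiber_size_bound x s : fiber_seq x s -> (size s)%:R * alpha <= 1.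
Proof.
move=> [s_uniq xs].
have [G G_bump] := exists_bump_family (R := R) K_hausdorff K_compact s.
have Gc := bump_continuous G_bump.
apply: (@le_trans _ _ (\sum_(z <- s) P (G z) x)).
  rewrite mulr_natl -iter_addr_0 -count_predT -big_const_seq !big_seq.
  apply: ler_sum => z zs.
  have := scal_le_op_fiber (xs z zs) (Gc z) (bump_ge0 G_bump z).
  by rewrite (bump_peak G_bump zs) mulr1.
rewrite -op_sum // -(op_cst 1 x); apply: ler_op.
- exact: continuous_sumr.
- exact: cst_continuous.
- by move=> y; exact: bump_sum_le1.
Qed.

Lemma exists_max_fiber (x1 : K) : exists x0 s0, fiber_seq x0 s0 /\
  forall x s, fiber_seq x s -> (size s <= size s0)%N.
Proof.
pose Q n := `[< exists x s, fiber_seq x s /\ size s = n >].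
have Q1 : exists n, Q n.
  exists 1%N; apply/asboolP; exists x1, [:: x1]; split => //.
  by split => // z; rewrite inE => /eqP ->; exact: fiber_refl.
have Q_bounded n : Q n -> (n <= Num.Def.archi_bound alpha^-1)%N.
  move=> /asboolP [x [s [xs <-]]].
  have : 0 <= alpha^-1 by rewrite invr_ge0 ltW.
  move/archi_boundP/ltW => bound; rewrite -(ler_nat R) (le_trans _ bound) //.
  by rewrite -div1r ler_pdivlMr //; exact: fiber_size_bound xs.
have [n /asboolP [x0 [s0 [x0s0 <-]]] n_max] := ex_maxnP Q1 Q_bounded.
exists x0, s0; split => // x s xs; apply: n_max; apply/asboolP; by exists x, s.
Qed.

Hypothesis mult_le_bound : forall f, continuous f ->
  CK_op_le (@zero_op R K) (mult_op f) -> CK_op_le (mult_op f) P ->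
  supnorm f <= alpha.

Section MaximalFiber.
Variables (x0 : K) (s0 : seq K) (G : K -> K -> R).
Hypotheses (s0_fiber : fiber_seq x0 s0)
  (s0_max : forall x s, fiber_seq x s -> (size s <= size s0)%N)
  (G_bump : bump_family s0 G).

Lemma max_fiber_mem {x t q} :
  fiber_seq x t -> size t = size s0 -> fiber x q -> q \in t.
Proof.
move=> [t_uniq xt] t_size xq; apply: contraT => qt.
have : (size (q :: t) <= size s0)%N.
  apply: (s0_max x); split; first by rewrite /= qt.
  by move=> z; rewrite inE => /orP [/eqP -> | /xt].
by rewrite /= t_size ltnn.
Qed.

Lemma alpha_le_op_bump {j x} : j \in s0 -> fiber x0 x -> alpha <= P (G j) x.
Proof.
move=> js x0x; have Gjc := bump_continuous G_bump j.
rewrite (x0x _ Gjc).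
have := scal_le_op_fiber (s0_fiber.2 j js) Gjc (bump_ge0 G_bump j).
by rewrite (bump_peak G_bump js) mulr1.
Qed.

Lemma op_bumps_sum1 : \sum_(z <- s0) P (G z) x0 = 1.
Proof.
have Gc := bump_continuous G_bump.
have sumGc : continuous (fun y => \sum_(z <- s0) G z y) by exact: continuous_sumr.
have : P (fun y => 1 - \sum_(z <- s0) G z y) x0 = 0.
  apply: op_eq0_off_fiber.
  - by apply: continuous_subr => //; exact: cst_continuous.
  - by move=> y; rewrite subr_ge0; exact: bump_sum_le1 s0_fiber.1 G_bump y.
  - move=> q x0q; rewrite bump_sum_at ?subrr //; first exact: s0_fiber.1.
    exact: max_fiber_mem s0_fiber erefl x0q.
rewrite opB ?op_cst ?op_sum //; last exact: cst_continuous.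
by move/eqP; rewrite subr_eq0 => /eqP <-.
Qed.

(* The fiber of y meets the support of every G_j in distinct points; as s0 is
   maximal these exhaust the fiber, so only y lies in the support of G_z1. *)
Lemma bump_fiber_single {z1 y} : z1 \in s0 -> 0 < G z1 y ->
  (forall j, j \in s0 -> 0 < P (G j) y) ->
  forall q, fiber y q -> q != y -> G z1 q = 0.
Proof.
move=> z1s Gz1y PGy.
have : forall j, exists q, j \in s0 -> fiber y q /\ G j q != 0.
  move=> j; have [js|] := boolP (j \in s0); last by exists y.
  have [q yq Gjq] := fiber_meets_support _ _ (bump_continuous G_bump j)
    (bump_ge0 G_bump j) (lt0r_neq0 (PGy j js)).
  by exists q.
move=> /choice [phi phiP].
have phi_supp j p : j \in s0 -> p \in s0 -> G p (phi j) != 0 -> p = j.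
  move=> js ps Gp; apply/eqP; apply: contraT => pj.
  have [/eqP|] := bump_disjoint G_bump (phi j) ps js pj.
    by rewrite (negbTE Gp).
  by have [_ /eqP] := phiP j js.
have y_phi : fiber_seq y (map phi s0).
  split; last by move=> z /mapP [j js ->]; have [] := phiP j js.
  rewrite map_inj_in_uniq; first exact: s0_fiber.1.
  move=> j k js ks jk; apply: (phi_supp k j ks js); rewrite -jk.
  by have [] := phiP j js.
have fiber_phi p : fiber y p -> G z1 p != 0 -> p = phi z1.
  move=> yp Gp; have /mapP [j js pj] := max_fiber_mem y_phi (size_map _ _) yp.
  by move: Gp; rewrite pj => /(phi_supp j z1 js z1s) ->.
move=> q yq qy; apply/eqP; apply: contraT => Gq; move: qy.
rewrite (fiber_phi q yq Gq) (fiber_phi y (fiber_refl y) (lt0r_neq0 Gz1y)).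
by rewrite eqxx.
Qed.

Definition cutoff z1 y := G z1 y * \prod_(j <- s0) P (G j) y.

(* The multiplier on which (ii) is tested: it is alpha off the support of the
   cutoff, and is bounded by P (G z1) where the cutoff is positive. *)
Definition test_multiplier z1 y :=
  Num.max alpha (Num.min (P (G z1) y) (alpha + cutoff z1 y)).

Lemma mult_test_le_op z1 : z1 \in s0 -> CK_op_le (mult_op (test_multiplier z1)) P.
Proof.
move=> z1s h hc h0 y; rewrite /mult_op subr_ge0.
have [low|] := leP (Num.min (P (G z1) y) (alpha + cutoff z1 y)) alpha.
  by rewrite /test_multiplier (max_idPl low); exact: scal_le_op.
rewrite lt_min => /andP[PGy_gt cutoff_gt].
have f_le : test_multiplier z1 y <= P (G z1) y.
  by rewrite /test_multiplier ge_max (ltW PGy_gt) ge_min lexx.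
have : cutoff z1 y != 0 by apply: lt0r_neq0; lra.
rewrite mulf_eq0 negb_or prodf_seq_neq0 => /andP[Gz1y /allP PGy].
have Gz1y_gt0 : 0 < G z1 y by rewrite lt0r Gz1y (bump_ge0 G_bump).
have PGy_gt0 j : j \in s0 -> 0 < P (G j) y.
  move=> js; rewrite lt0r P_pos ?andbT; first exact: PGy j js.
  - exact: bump_continuous G_bump j.
  - exact: bump_ge0 G_bump j.
have := op_local_lower (bump_continuous G_bump z1) (bump_ge0 G_bump z1) _
  (bump_fiber_single z1s Gz1y_gt0 PGy_gt0) hc h0.
rewrite Gz1y_gt0 (bump_le1 G_bump) => /(_ isT); apply: le_trans.
by rewrite mulrC ler_wpM2l.
Qed.

Lemma op_bump_le z1 : z1 \in s0 -> P (G z1) x0 <= alpha.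
Proof.
move=> z1s; have Gc := bump_continuous G_bump.
have PGc j : continuous (P (G j)) by exact: P_maps.
have fc : continuous (test_multiplier z1).
  apply: continuous_maxr; first exact: cst_continuous.
  apply: continuous_minr => //; apply: continuous_addr; first exact: cst_continuous.
  by apply: continuous_mulr => //; exact: continuous_prodr.
have f_ge0 y : 0 <= test_multiplier z1 y by rewrite le_max ltW.
have f_bounded y : `|test_multiplier z1 y| <= Num.max alpha 1.
  rewrite ger0_norm // ge_max le_max lexx /= ge_min le_max.
  apply/orP; left; apply/orP; right; rewrite -(op_cst 1 y).
  apply: ler_op => // [|z]; first exact: cst_continuous.
  exact: bump_le1 G_bump z1 z.
have f_z1 : test_multiplier z1 z1 <= alpha.
  have := ler_supnorm z1 f_bounded; rewrite ger0_norm // => /le_trans; apply.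
  apply: mult_le_bound => //; last exact: mult_test_le_op.
  by move=> h hc h0 y; rewrite /zero_op /mult_op subr0 mulr_ge0.
have cutoff_gt0 : 0 < cutoff z1 z1.
  rewrite /cutoff (bump_peak G_bump z1s) mul1r big_seq; apply: prodr_gt0 => j js.
  exact: lt_le_trans alpha_gt0 (alpha_le_op_bump js (s0_fiber.2 z1 z1s)).
move: f_z1; rewrite /test_multiplier ge_max ge_min -(s0_fiber.2 z1 z1s _ (Gc z1)).
by case/andP => _ /orP [//|]; lra.
Qed.

Lemma alpha_eq_inv_size : alpha = (size s0)%:R^-1.
Proof.
have size_alpha : (size s0)%:R * alpha = 1.
  rewrite mulr_natl -iter_addr_0 -count_predT -big_const_seq -op_bumps_sum1.
  rewrite !big_seq; apply: eq_bigr => z zs.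
  by apply/eqP; rewrite eq_le op_bump_le // (alpha_le_op_bump zs (fiber_refl x0)).
have size_neq0 : (size s0)%:R != 0 :> R.
  apply/eqP => size0; move: size_alpha.
  by rewrite size0 mul0r => /eqP; rewrite eq_sym oner_eq0.
by apply: (mulfI size_neq0); rewrite size_alpha mulfV.
Qed.

End MaximalFiber.

Lemma alpha_inv_nat (x1 : K) : exists n, (0 < n)%N /\ alpha = n%:R^-1.
Proof.
have [x0 [s0 [x0s0 s0_max]]] := exists_max_fiber x1.
have [G G_bump] := exists_bump_family (R := R) K_hausdorff K_compact s0.
have alphaE := alpha_eq_inv_size _ _ _ x0s0 s0_max G_bump.
exists (size s0); split => //; rewrite lt0n; apply/eqP => s0_nil.
by move: alpha_gt0; rewrite alphaE s0_nil invr0 ltxx.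
Qed.

End Projection.

End PositiveOperator.

Theorem theorem2p1 (R : realType) (K : topologicalType)
  (P : (K -> R) -> (K -> R)) (alpha : R) :
  hausdorff_space K -> compact [set: K] -> [set: K] !=set0 ->
  CK_op_maps P -> CK_linear P ->
  (forall f : K -> R, continuous f -> P (P f) = P f) ->
  CK_positive P ->
  P (fun _ => 1) = (fun _ => 1) ->
  0 <= alpha ->
  CK_op_le (scal_id alpha) P ->
  (forall f : K -> R, continuous f ->
     CK_op_le (@zero_op R K) (mult_op f) -> CK_op_le (mult_op f) P ->
     supnorm f <= alpha) ->
  alpha = 0 \/ exists n : nat, (0 < n)%N /\ alpha = n%:R^-1.
Proof.
move=> K_hausdorff K_compact [x1 _] P_maps P_linear P_idem P_pos P1 alpha_ge0
  alpha_le_P mult_le_bound.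
have [->|alpha_neq0] := eqVneq alpha 0; [by left | right].
have alpha_gt0 : 0 < alpha by rewrite lt0r alpha_neq0 alpha_ge0.
exact: (@alpha_inv_nat R K P P_maps P_linear P_pos P1 alpha P_idem alpha_gt0
  alpha_le_P K_compact K_hausdorff mult_le_bound x1).
Qed.
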